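(* Let $r_{\rm A}>0$, $\theta_{\rm A}\in\,]0,\pi/2[$, and let $0<x_{\rm B}<x_{\rm A}$ be defined by $x_{\rm A}+x_{\rm B}=2r_{\rm A}$, $x_{\rm A}-x_{\rm B}=2r_{\rm A}\cos\theta_{\rm A}$ (so that $\sqrt{x_{\rm B}/x_{\rm A}}=\tan(\theta_{\rm A}/2)$ and $\sqrt{x_{\rm A}x_{\rm B}}=r_{\rm A}\sin\theta_{\rm A}$). Define $$v_{\rm A}(\eta)=\frac{\eta-\sqrt{x_{\rm B}/x_{\rm A}}}{\sqrt{(x_{\rm A}+x_{\rm B})/2-\eta\sqrt{x_{\rm A}x_{\rm B}}}}.$$ Then $\eta\mapsto v_{\rm A}(\eta)$ is a bijection from $]-\infty,1[$ onto $]-\infty,v_E[$, $v_E=\sqrt{2/x_{\rm A}}$, and for every $\eta\in\,]-\infty,1[$: $$T_D^S(\eta)=T_D^R(v_{\rm A}(\eta)),\qquad H^S(\eta)=H^R(v_{\rm A}(\eta)),$$ where $H^S(\eta)=\dfrac{\eta^2-1}{2r_{\rm A}(1-\eta\sin\theta_{\rm A})}$ and $H^R(v)=\tfrac12v^2-\tfrac1{x_{\rm A}}$.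
   Context: Kepler problem normalized as $\ddot q=-q/|q|^3$, center ${\rm O}$ at the origin. $T_D^S(\eta)$ is the elapsed time of the direct Keplerian arc from ${\rm A}=(r_{\rm A}\cos\theta_{\rm A},r_{\rm A}\sin\theta_{\rm A})$ to ${\rm B}=(-r_{\rm A}\cos\theta_{\rm A},r_{\rm A}\sin\theta_{\rm A})$ lying on the conic $r=r_{\rm A}(1-\eta\sin\theta_{\rm A})/(1-\eta\sin\theta)$ (polar coordinates about ${\rm O}$), traversed with $\theta$ increasing from $\theta_{\rm A}$ to $\pi-\theta_{\rm A}$; explicitly $T_D^S(\eta)=\int_{\theta_{\rm A}}^{\pi-\theta_{\rm A}}r_{\rm A}^{3/2}(1-\eta\sin\theta_{\rm A})^{3/2}(1-\eta\sin\theta)^{-2}{\rm d}\theta$; $H^S(\eta)$ is its energy $|\dot q|^2/2-1/|q|$. $T_D^R(v)$, for $v<\sqrt{2/x_{\rm A}}$, is the first time after $t_{\rm A}$ (minus $t_{\rm A}$) at which the solution of $\ddot x=-1/x^2$ with $x(t_{\rm A})=x_{\rm A}$, $\dot x(t_{\rm A})=v$ reaches $x_{\rm B}$ (this happens before any collision with $0$); $H^R(v)$ is its energy. *)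

From Stdlib Require Import Reals Lra.
Open Scope R_scope.

Definition TDS_integrand (rA thA eta : R) (th : R) : R :=
  Rpower rA (3/2) * Rpower (1 - eta * sin thA) (3/2) / (1 - eta * sin th) ^ 2.

Definition HS (rA thA eta : R) : R :=
  (eta ^ 2 - 1) / (2 * rA * (1 - eta * sin thA)).

Definition HR (xA v : R) : R := / 2 * v ^ 2 - / xA.

Definition vA (xA xB eta : R) : R :=
  (eta - sqrt (xB / xA)) / sqrt ((xA + xB) / 2 - eta * sqrt (xA * xB)).

(* x (with velocity x') solves  x'' = -1/x^2  with x > 0 on [0,T]
   (time origin t_A = 0; the equation is autonomous). *)
Definition radial_sol (x x' : R -> R) (T : R) : Prop :=
  forall t, 0 <= t <= T ->
    0 < x t /\ derivable_pt_lim x t (x' t) /\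
    derivable_pt_lim x' t (- / (x t) ^ 2).

Definition is_TDR (xA xB v T : R) : Prop :=
  0 < T /\
  exists x x' : R -> R,
    radial_sol x x' T /\ x 0 = xA /\ x' 0 = v /\ x T = xB /\
    (forall t, 0 <= t < T -> x t <> xB).

(* Write [s = sin thA] and [c = cos thA], so that [xA = rA (1 + c)] and
   [xB = rA (1 - c)], and let [l = rA (1 - eta s)] be the parameter of the conic.
   With [D = sqrt (1 - eta s)] one has [vA = (c / D - D) / (s sqrt rA)], a decreasing
   function of [D] equal to [sqrt (2 / xA)] at [eta = 1]; this gives the bijection,
   and the energy identity is a computation.
   For the time identity, follow [X = r (1 + cos th)] along the arc: in the time
   [tau] with [dtau = (1 + cos th) dt], [X] obeys [X'' = -1 / X^2] with velocity
   [(eta - tan (th / 2)) / sqrt l]; it starts at [xA] with velocity [vA] and first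
   reaches [xB] at [th = PI - thA]. The two elapsed times differ by the integral of
   [cos th dt], the differential of a function of [sin th], which vanishes over the
   symmetric interval [[thA, PI - thA]]. *)

From Stdlib Require Import Reals Lra Psatz Ranalysis5 FunctionalExtensionality.
From Coquelicot Require Import Coquelicot.
Open Scope R_scope.

Lemma recip_sub_decreasing k D1 D2 :
  0 < k -> 0 < D1 < D2 -> k / D2 - D2 < k / D1 - D1.
Proof.
  intros hk hD. enough (k / D2 < k / D1) by lra.
  apply Rmult_lt_compat_l; [lra | apply Rinv_lt_contravar; nra].
Qed.

(* [D] is the positive root of [D^2 + b D - k]. *)
Lemma recip_sub_surjective k b : 0 < k -> exists D, 0 < D /\ k / D - D = b.
Proof.
  intros hk.
  assert (hdisc : 0 <= b ^ 2 + 4 * k) by nra.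
  assert (hsq := sqrt_sqrt _ hdisc).
  assert (hb : b < sqrt (b ^ 2 + 4 * k)).
  { destruct (Rlt_or_le b 0); [assert (h := sqrt_pos (b ^ 2 + 4 * k)); lra|].
    rewrite <- (sqrt_pow2 b) at 1 by lra. apply sqrt_lt_1_alt; nra. }
  set (S := sqrt (b ^ 2 + 4 * k)) in *.
  exists ((- b + S) / 2); split; [lra|].
  field_simplify_eq; [|lra]. replace (S ^ 2) with (b ^ 2 + 4 * k) by (rewrite <- hsq; ring). ring.
Qed.

Section VelocityAtA.

Variables (rA s c : R).
Hypotheses (rA_pos : 0 < rA) (s_pos : 0 < s) (c_pos : 0 < c) (sc1 : s ^ 2 + c ^ 2 = 1).

Let xA := rA * (1 + c).
Let xB := rA * (1 - c).

Lemma s_lt_1 : s < 1.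
Proof. nra. Qed.

Lemma vA_polar eta :
  vA xA xB eta = (eta - s / (1 + c)) / sqrt (rA * (1 - eta * s)).
Proof.
  unfold vA, xA, xB.
  replace (rA * (1 - c) / (rA * (1 + c))) with ((s / (1 + c)) ^ 2)
    by (field_simplify_eq; lra).
  replace (rA * (1 + c) * (rA * (1 - c))) with ((rA * s) ^ 2) by nra.
  rewrite !sqrt_pow2 by (apply Rlt_le; try apply Rdiv_lt_0_compat; nra).
  now replace ((rA * (1 + c) + rA * (1 - c)) / 2 - eta * (rA * s))
    with (rA * (1 - eta * s)) by field.
Qed.

Lemma vA_recip_sub eta : 0 < 1 - eta * s ->
  vA xA xB eta
  = (c / sqrt (1 - eta * s) - sqrt (1 - eta * s)) / (s * sqrt rA).
Proof.
  intros hd. rewrite vA_polar, sqrt_mult by lra.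
  assert (hD := sqrt_lt_R0 _ hd). assert (hR := sqrt_lt_R0 _ rA_pos).
  assert (hD2 := sqrt_sqrt (1 - eta * s) ltac:(lra)).
  set (D := sqrt (1 - eta * s)) in *.
  field_simplify_eq; [|lra..].
  replace (D ^ 2) with (1 - eta * s) by (rewrite <- hD2; ring). nra.
Qed.

Lemma sqrt_2_div_xA : sqrt (2 / xA) = vA xA xB 1.
Proof.
  assert (hs1 := s_lt_1).
  rewrite vA_polar, Rmult_1_l.
  assert (hR : 0 < rA * (1 - s)) by nra.
  assert (hpos : 0 <= (1 - s / (1 + c)) / sqrt (rA * (1 - s))).
  { apply Rlt_le, Rdiv_lt_0_compat; [|now apply sqrt_lt_R0].
    replace (1 - s / (1 + c)) with ((1 + c - s) / (1 + c)) by (field; lra).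
    apply Rdiv_lt_0_compat; lra. }
  rewrite <- (sqrt_pow2 _ hpos). f_equal.
  unfold Rdiv at 2. rewrite Rpow_mult_distr, pow_inv, pow2_sqrt by lra.
  unfold xA. field_simplify_eq; nra.
Qed.

Lemma vA_increasing e1 e2 : e1 < e2 <= 1 -> vA xA xB e1 < vA xA xB e2.
Proof.
  intros he. assert (hs1 := s_lt_1).
  assert (hd2 : 0 < 1 - e2 * s) by nra.
  rewrite !vA_recip_sub by nra.
  apply Rmult_lt_compat_r; [apply Rinv_0_lt_compat, Rmult_lt_0_compat; auto using sqrt_lt_R0|].
  apply recip_sub_decreasing; [lra|split; [now apply sqrt_lt_R0|apply sqrt_lt_1_alt; nra]].
Qed.

Lemma vA_lt_sqrt_2_div_xA eta : eta < 1 -> vA xA xB eta < sqrt (2 / xA).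
Proof. intros he. rewrite sqrt_2_div_xA. apply vA_increasing; lra. Qed.

Lemma vA_injective e1 e2 : e1 < 1 -> e2 < 1 -> vA xA xB e1 = vA xA xB e2 -> e1 = e2.
Proof.
  intros h1 h2 heq. destruct (Rtotal_order e1 e2) as [h|[h|h]]; auto.
  - assert (vA xA xB e1 < vA xA xB e2) by (apply vA_increasing; lra). lra.
  - assert (vA xA xB e2 < vA xA xB e1) by (apply vA_increasing; lra). lra.
Qed.

Lemma vA_surjective v : v < sqrt (2 / xA) -> exists eta, eta < 1 /\ vA xA xB eta = v.
Proof.
  intros hv. assert (hs1 := s_lt_1). assert (hR := sqrt_lt_R0 _ rA_pos).
  destruct (recip_sub_surjective c (v * (s * sqrt rA)) c_pos) as [D [hD hDv]].
  assert (hvD : v = (c / D - D) / (s * sqrt rA)) by (rewrite hDv; field; nra).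
  assert (hD1 : sqrt (1 - s) < D).
  { destruct (Rlt_or_le (sqrt (1 - s)) D) as [|[hlt|heq]]; auto; exfalso;
      rewrite sqrt_2_div_xA, vA_recip_sub, Rmult_1_l, hvD in hv by lra.
    - assert (h := recip_sub_decreasing c D (sqrt (1 - s)) c_pos (conj hD hlt)).
      enough ((c / sqrt (1 - s) - sqrt (1 - s)) / (s * sqrt rA)
              < (c / D - D) / (s * sqrt rA)) by lra.
      apply Rmult_lt_compat_r; [apply Rinv_0_lt_compat; nra | exact h].
    - rewrite heq in hv. lra. }
  assert (hD2 : 1 - s < D * D).
  { rewrite <- (sqrt_sqrt (1 - s)) by lra.
    assert (0 <= sqrt (1 - s)) by apply sqrt_pos. nra. }
  assert (hdD : 1 - (1 - D * D) / s * s = D * D) by (field; lra).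
  exists ((1 - D * D) / s). split.
  - apply (Rmult_lt_reg_r s); [lra|]. field_simplify; nra.
  - rewrite vA_recip_sub, hdD, sqrt_square by nra. now rewrite hvD.
Qed.

Lemma HS_eq_HR_vA eta : 0 < 1 - eta * s ->
  (eta ^ 2 - 1) / (2 * rA * (1 - eta * s)) = HR xA (vA xA xB eta).
Proof.
  intros hd. unfold HR. rewrite vA_polar.
  assert (hq : 0 < rA * (1 - eta * s)) by nra.
  unfold Rdiv at 2. rewrite Rpow_mult_distr, pow_inv, pow2_sqrt by lra.
  unfold xA. field_simplify_eq; nra.
Qed.

End VelocityAtA.

Section TimeChange.

Variables (tau G : R -> R) (lb ub : R).
Hypothesis lb_lt_ub : lb < ub.
Hypothesis tau_deriv : forall th, lb <= th <= ub -> derivable_pt_lim tau th (G th).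
Hypothesis G_pos : forall th, lb <= th <= ub -> 0 < G th.

Lemma tau_increasing u v : lb <= u -> u < v -> v <= ub -> tau u < tau v.
Proof.
  intros hu huv hv.
  destruct (MVT_cor2 tau G u v huv) as [w [hw hwuv]].
  { intros w hw. apply tau_deriv; lra. }
  assert (0 < G w) by (apply G_pos; lra). nra.
Qed.

Lemma tau_continuous th : lb <= th <= ub -> continuity_pt tau th.
Proof. intros hth. apply derivable_continuous_pt. exists (G th). now apply tau_deriv. Qed.

Lemma tau_inverse_exists :
  exists Th : R -> R, forall t, tau lb <= t <= tau ub -> lb <= Th t <= ub /\ tau (Th t) = t.
Proof.
  exists (fun t => match Rle_dec (tau lb) t, Rle_dec t (tau ub) with
    | left h1, left h2 => proj1_sig (f_interv_is_interv tau lb ub t lb_lt_ub (conj h1 h2) tau_continuous)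
    | _, _ => lb end).
  intros t [h1 h2].
  destruct (Rle_dec (tau lb) t) as [h1'|]; [|lra].
  destruct (Rle_dec t (tau ub)) as [h2'|]; [|lra].
  apply proj2_sig.
Qed.

Section Inverse.

Variable Th : R -> R.
Hypothesis Th_spec : forall t, tau lb <= t <= tau ub -> lb <= Th t <= ub /\ tau (Th t) = t.

Lemma Th_tau th : lb <= th <= ub -> Th (tau th) = th.
Proof.
  intros hth.
  assert (hrange : tau lb <= tau th <= tau ub).
  { split; [destruct (Req_dec lb th) | destruct (Req_dec th ub)]; subst;
      try lra; apply Rlt_le, tau_increasing; lra. }
  destruct (Th_spec _ hrange) as [hTh htau].
  destruct (Rtotal_order (Th (tau th)) th) as [h|[h|h]]; auto;
    apply tau_increasing in h; lra.
Qed.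

Lemma Th_derivable t : tau lb < t < tau ub -> derivable_pt_lim Th t (/ G (Th t)).
Proof.
  intros ht.
  assert (Prf : forall th, Th (tau lb) <= th <= Th (tau ub) -> derivable_pt tau th).
  { intros th hth. rewrite !Th_tau in hth by lra. exists (G th). now apply tau_deriv. }
  assert (Th_cont : continuity_pt Th t).
  { apply (continuity_pt_recip_interv tau Th lb ub lb_lt_ub); try lra.
    - intros; apply tau_increasing; lra.
    - intros u h1 h2. unfold comp, id. apply Th_spec; lra.
    - intros u h1 h2. apply Th_spec; lra.
    - exact tau_continuous. }
  assert (hTh : lb <= Th t <= ub) by (apply Th_spec; lra).
  assert (Th_range : Th (tau lb) <= Th t <= Th (tau ub)) by (rewrite !Th_tau; lra).
  assert (hG : derive_pt tau (Th t) (Prf (Th t) Th_range) = G (Th t)).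
  { apply derive_pt_eq_0, tau_deriv; lra. }
  assert (0 < G (Th t)) by (apply G_pos; lra).
  replace (/ G (Th t)) with (1 / derive_pt tau (Th t) (Prf (Th t) Th_range)) by (rewrite hG; field; lra).
  apply (derivable_pt_lim_recip_interv tau Th (tau lb) (tau ub) t Prf Th_cont); try lra.
  intros u hu. unfold comp, id. apply Th_spec; lra.
Qed.

End Inverse.

Variables (X W : R -> R).
Hypothesis X_pos : forall th, lb <= th <= ub -> 0 < X th.
Hypothesis X_deriv : forall th, lb <= th <= ub -> derivable_pt_lim X th (W th * G th).
Hypothesis W_deriv : forall th, lb <= th <= ub -> derivable_pt_lim W th (- / X th ^ 2 * G th).

Lemma radial_sol_time_change a b : lb < a -> a < b -> b < ub -> tau a = 0 ->
  exists x x' : R -> R,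
    radial_sol x x' (tau b) /\ x 0 = X a /\ x' 0 = W a /\ x (tau b) = X b /\
    (forall t, 0 <= t < tau b -> exists th, a <= th < b /\ x t = X th).
Proof.
  intros hla hab hbu hta.
  destruct tau_inverse_exists as [Th Th_spec].
  assert (hlb : tau lb < 0) by (rewrite <- hta; apply tau_increasing; lra).
  assert (hub : tau b < tau ub) by (apply tau_increasing; lra).
  assert (Th_ab : forall t, 0 <= t <= tau b -> a <= Th t <= b).
  { intros t ht. destruct (Th_spec t ltac:(lra)) as [hTh htau].
    split; apply Rnot_lt_le; intros h; apply tau_increasing in h; lra. }
  exists (fun t => X (Th t)), (fun t => W (Th t)).
  rewrite <- hta, !(Th_tau Th Th_spec) by lra.
  split; [|repeat split; auto].
  - intros t ht.
    assert (hTh := Th_ab t ht). assert (hG : 0 < G (Th t)) by (apply G_pos; lra).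
    assert (dTh := Th_derivable Th Th_spec t ltac:(lra)).
    assert (hX : 0 < X (Th t)) by (apply X_pos; lra).
    split; [exact hX|split].
    + replace (W (Th t)) with (W (Th t) * G (Th t) * / G (Th t)) by (field; lra).
      apply (derivable_pt_lim_comp Th X); auto. apply X_deriv; lra.
    + replace (- / X (Th t) ^ 2) with (- / X (Th t) ^ 2 * G (Th t) * / G (Th t)) by (field; lra).
      apply (derivable_pt_lim_comp Th W); auto. apply W_deriv; lra.
  - intros t ht. exists (Th t). split; auto.
    destruct (Th_ab t ltac:(lra)) as [h1 [h2|h2]]; [lra|].
    destruct (Th_spec t ltac:(lra)) as [_ htau]. rewrite h2 in htau. lra.
Qed.

End TimeChange.

Lemma one_add_cos_pos th : 0 < th < PI -> 0 < 1 + cos th.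
Proof.
  intros hth. assert (hs := sin_gt_0 _ (proj1 hth) (proj2 hth)).
  assert (hsc := sin2_cos2 th). unfold Rsqr in hsc.
  destruct (COS_bound th) as [hc _]. destruct hc as [hc|hc]; [lra|nra].
Qed.

Lemma one_sub_mul_pos eta s : 0 <= s <= 1 -> eta < 1 -> 0 < 1 - eta * s.
Proof. intros hs he; destruct (Rle_lt_dec 0 eta); nra. Qed.

Lemma one_sub_mul_sin_pos eta th : eta < 1 -> 0 < th < PI -> 0 < 1 - eta * sin th.
Proof.
  intros he hth. apply one_sub_mul_pos; auto.
  split; [apply Rlt_le, sin_gt_0; lra | apply SIN_bound].
Qed.

Lemma in_0_PI_between a b z : 0 < a < PI -> 0 < b < PI -> Rmin a b <= z <= Rmax a b -> 0 < z < PI.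
Proof. unfold Rmin, Rmax; destruct (Rle_dec a b); lra. Qed.

Definition half_tan th := sin th / (1 + cos th).

Lemma half_tan_increasing u v : 0 < u -> u < v -> v < PI -> half_tan u < half_tan v.
Proof.
  intros hu huv hv.
  destruct (MVT_cor2 half_tan (fun th => / (1 + cos th)) u v huv) as [w [hw hwuv]].
  { intros w hw. assert (hc := one_add_cos_pos w ltac:(lra)).
    assert (hsc := sin2_cos2 w). unfold Rsqr in hsc.
    apply is_derive_Reals. unfold half_tan. auto_derive; [lra|]. field_simplify_eq; lra. }
  assert (0 < / (1 + cos w)) by (apply Rinv_0_lt_compat, one_add_cos_pos; lra). nra.
Qed.

Lemma half_tan_supplementary th : 0 < th < PI -> half_tan th * half_tan (PI - th) = 1.
Proof.
  intros hth. unfold half_tan. rewrite sin_PI_x, Rtrigo_facts.cos_pi_minus.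
  assert (hs := sin_gt_0 _ (proj1 hth) (proj2 hth)).
  assert (hc := one_add_cos_pos th hth).
  assert (hsc := sin2_cos2 th). unfold Rsqr in hsc.
  assert (hc' : 0 < 1 + - cos th) by nra.
  field_simplify_eq; nra.
Qed.

Lemma Rpower_3_2 x : 0 < x -> Rpower x (3 / 2) = x * sqrt x.
Proof.
  intros hx. replace (3 / 2) with (1 + / 2) by field.
  rewrite Rpower_plus, Rpower_1, Rpower_sqrt; auto.
Qed.

Section ConicArc.

Variables (eta l : R).
Hypotheses (eta_lt_1 : eta < 1) (l_pos : 0 < l).

(* [kepler_rate] is the Kepler rate [dt/dth = r^2 / sqrt l] along the conic
   [r = l / (1 - eta sin th)]. [conic_X = r (1 + cos th)] and [conic_W] move as a
   radial Kepler motion in the time of rate [conic_G]. *)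
Definition kepler_rate th := l * sqrt l / (1 - eta * sin th) ^ 2.
Definition conic_G th := (1 + cos th) * kepler_rate th.
Definition conic_X th := l * (1 + cos th) / (1 - eta * sin th).
Definition conic_W th := (eta - half_tan th) / sqrt l.

Lemma kepler_rate_ex_derive th : 0 < th < PI -> ex_derive kepler_rate th.
Proof.
  intros hth. assert (hd := one_sub_mul_sin_pos eta th eta_lt_1 hth).
  unfold kepler_rate. auto_derive. nra.
Qed.

Lemma conic_X_pos th : 0 < th < PI -> 0 < conic_X th.
Proof.
  intros hth. apply Rdiv_lt_0_compat; [apply Rmult_lt_0_compat; auto|];
    auto using one_add_cos_pos, one_sub_mul_sin_pos.
Qed.

Lemma kepler_rate_pos th : 0 < th < PI -> 0 < kepler_rate th.
Proof.
  intros hth. assert (hd := one_sub_mul_sin_pos eta th eta_lt_1 hth).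
  apply Rdiv_lt_0_compat; [apply Rmult_lt_0_compat, sqrt_lt_R0; auto | now apply pow_lt].
Qed.

Lemma conic_G_pos th : 0 < th < PI -> 0 < conic_G th.
Proof. intros hth. apply Rmult_lt_0_compat; auto using one_add_cos_pos, kepler_rate_pos. Qed.

Lemma conic_X_deriv th : 0 < th < PI ->
  derivable_pt_lim conic_X th (conic_W th * conic_G th).
Proof.
  intros hth. assert (hc := one_add_cos_pos th hth).
  assert (hd := one_sub_mul_sin_pos eta th eta_lt_1 hth).
  assert (hsc := sin2_cos2 th). unfold Rsqr in hsc.
  assert (hq := sqrt_lt_R0 _ l_pos). assert (hq2 := sqrt_sqrt l ltac:(lra)).
  apply is_derive_Reals. unfold conic_X. auto_derive; [lra|].
  unfold conic_W, conic_G, kepler_rate, half_tan. field_simplify_eq; [|lra..].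
  replace (cos th ^ 2) with (1 - sin th ^ 2) by nra. ring.
Qed.

Lemma conic_W_deriv th : 0 < th < PI ->
  derivable_pt_lim conic_W th (- / conic_X th ^ 2 * conic_G th).
Proof.
  intros hth. assert (hc := one_add_cos_pos th hth).
  assert (hd := one_sub_mul_sin_pos eta th eta_lt_1 hth).
  assert (hsc := sin2_cos2 th). unfold Rsqr in hsc.
  assert (hq := sqrt_lt_R0 _ l_pos). assert (hq2 := sqrt_sqrt l ltac:(lra)).
  apply is_derive_Reals. unfold conic_W, half_tan. auto_derive; [repeat split; lra|].
  unfold conic_X, conic_G, kepler_rate. field_simplify_eq; [|lra..].
  rewrite pow2_sqrt by lra. replace (cos th ^ 2) with (1 - sin th ^ 2) by nra. ring.
Qed.

Lemma conic_G_continuous th : 0 < th < PI -> continuous conic_G th.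
Proof.
  intros hth. assert (hd := one_sub_mul_sin_pos eta th eta_lt_1 hth).
  apply (ex_derive_continuous (K := R_AbsRing) (V := R_NormedModule)).
  unfold conic_G, kepler_rate. auto_derive. nra.
Qed.

Lemma conic_tau_deriv a th : 0 < a < PI -> 0 < th < PI ->
  derivable_pt_lim (RInt conic_G a) th (conic_G th).
Proof.
  intros ha hth. apply is_derive_Reals, (is_derive_RInt _ _ a); [|now apply conic_G_continuous].
  apply (locally_interval _ th (Finite 0) (Finite PI)); simpl; try lra.
  intros y h1 h2. apply (RInt_correct (V := R_CompleteNormedModule)).
  apply (ex_RInt_continuous (V := R_CompleteNormedModule)).
  intros z hz. apply conic_G_continuous, (in_0_PI_between a y); auto.
Qed.

(* [conic_G] exceeds [kepler_rate] by [l sqrt l cos th / (1 - eta sin th)^2], the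
   derivative of [l sqrt l sin th / (1 - eta sin th)], which takes the same value at
   [a] and [PI - a]. *)
Lemma RInt_conic_G a : 0 < a < PI -> RInt conic_G a (PI - a) = RInt kepler_rate a (PI - a).
Proof.
  intros ha.
  assert (hb : 0 < PI - a < PI) by lra.
  set (K := l * sqrt l).
  set (extra := fun th => K * cos th / (1 - eta * sin th) ^ 2).
  assert (hextra : is_RInt extra a (PI - a) 0).
  { replace 0 with (minus ((fun th => K * sin th / (1 - eta * sin th)) (PI - a))
                          ((fun th => K * sin th / (1 - eta * sin th)) a))
      by (rewrite sin_PI_x; unfold minus, plus, opp; simpl; ring).
    apply (is_RInt_derive (V := R_CompleteNormedModule)
             (fun th => K * sin th / (1 - eta * sin th))); intros th hth;
      assert (hd := one_sub_mul_sin_pos eta th eta_lt_1 (in_0_PI_between _ _ _ ha hb hth)).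
    - unfold extra. auto_derive; [lra|]. field. lra.
    - apply (ex_derive_continuous (K := R_AbsRing) (V := R_NormedModule)).
      unfold extra. auto_derive. nra. }
  rewrite (RInt_ext _ (fun th => plus (kepler_rate th) (extra th))).
  2:{ intros th hth.
      assert (hd := one_sub_mul_sin_pos eta th eta_lt_1
                      (in_0_PI_between a (PI - a) th ha hb ltac:(lra))).
      unfold conic_G, kepler_rate, extra, plus, K; simpl. field. lra. }
  rewrite (RInt_plus (V := R_CompleteNormedModule)), (is_RInt_unique _ _ _ _ hextra).
  - unfold plus; simpl. ring.
  - apply (ex_RInt_continuous (V := R_CompleteNormedModule)). intros z hz.
    apply (ex_derive_continuous (K := R_AbsRing) (V := R_NormedModule)), kepler_rate_ex_derive.
    now apply (in_0_PI_between a (PI - a)).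
  - exact (ex_intro _ _ hextra).
Qed.

Lemma conic_X_half_tan th : 0 < th < PI ->
  conic_X th = 2 * l / (1 + half_tan th ^ 2 - 2 * eta * half_tan th).
Proof.
  intros hth. assert (hc := one_add_cos_pos th hth).
  assert (hd := one_sub_mul_sin_pos eta th eta_lt_1 hth).
  assert (hsc := sin2_cos2 th). unfold Rsqr in hsc.
  assert (hu : 1 + half_tan th ^ 2 - 2 * eta * half_tan th
               = 2 * (1 - eta * sin th) / (1 + cos th)).
  { unfold half_tan. field_simplify_eq; [|lra]. nra. }
  rewrite hu. unfold conic_X. field. lra.
Qed.

Lemma conic_X_neq_end a th : 0 < a -> a <= th < PI - a -> conic_X th <> conic_X (PI - a).
Proof.
  intros ha hth heq.
  assert (huA : half_tan a <= half_tan th).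
  { destruct (proj1 hth) as [h|h]; [apply Rlt_le, half_tan_increasing|subst]; lra. }
  assert (huB : half_tan th < half_tan (PI - a)) by (apply half_tan_increasing; lra).
  assert (hAB := half_tan_supplementary a ltac:(lra)).
  rewrite !conic_X_half_tan in heq by lra.
  set (u := half_tan th) in *. set (uA := half_tan a) in *. set (uB := half_tan (PI - a)) in *.
  assert (hq : 1 + u ^ 2 - 2 * eta * u = 1 + uB ^ 2 - 2 * eta * uB).
  { unfold Rdiv in heq. apply Rmult_eq_reg_l in heq; [|lra].
    rewrite <- (Rinv_inv (1 + u ^ 2 - 2 * eta * u)), heq, Rinv_inv. reflexivity. }
  assert (huA0 : 0 < uA).
  { apply Rdiv_lt_0_compat; [apply sin_gt_0|apply one_add_cos_pos]; lra. }
  (* [u + uB >= uA + 1 / uA >= 2 > 2 eta], so [uB] is the only root in [[uA, uB]]. *)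
  assert (hsum : 2 <= uA + uB) by nra.
  nra.
Qed.

End ConicArc.

Lemma conic_arc_is_TDR eta l a : eta < 1 -> 0 < l -> 0 < a < PI / 2 ->
  is_TDR (conic_X eta l a) (conic_X eta l (PI - a)) (conic_W eta l a)
         (RInt (conic_G eta l) a (PI - a)).
Proof.
  intros he hl ha.
  set (tau := RInt (conic_G eta l) a).
  change (RInt (conic_G eta l) a (PI - a)) with (tau (PI - a)).
  assert (tau_deriv : forall th, a / 2 <= th <= PI - a / 2 ->
                        derivable_pt_lim tau th (conic_G eta l th))
    by (intros th hth; apply conic_tau_deriv; auto; lra).
  assert (G_pos : forall th, a / 2 <= th <= PI - a / 2 -> 0 < conic_G eta l th)
    by (intros; apply conic_G_pos; auto; lra).
  assert (tau_a : tau a = 0) by apply (RInt_point (V := R_CompleteNormedModule)).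
  split.
  { rewrite <- tau_a. apply (tau_increasing tau (conic_G eta l) (a / 2) (PI - a / 2)); auto; lra. }
  destruct (radial_sol_time_change tau (conic_G eta l) (a / 2) (PI - a / 2) ltac:(lra)
              tau_deriv G_pos (conic_X eta l) (conic_W eta l)
              ltac:(intros; apply conic_X_pos; auto; lra)
              ltac:(intros; apply conic_X_deriv; auto; lra)
              ltac:(intros; apply conic_W_deriv; auto; lra)
              a (PI - a) ltac:(lra) ltac:(lra) ltac:(lra) tau_a)
    as [x [x' [hsol [hx0 [hx'0 [hxT hfirst]]]]]].
  exists x, x'. do 4 (split; [assumption|]).
  intros t ht. destruct (hfirst t ht) as [th [hth ->]].
  apply conic_X_neq_end; auto; lra.
Qed.

Lemma TDS_integrand_kepler_rate rA thA eta : 0 < rA -> 0 < 1 - eta * sin thA ->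
  TDS_integrand rA thA eta = kepler_rate eta (rA * (1 - eta * sin thA)).
Proof.
  intros hr hd. unfold TDS_integrand, kepler_rate.
  rewrite !Rpower_3_2, sqrt_mult by lra.
  apply functional_extensionality. intros th. unfold Rdiv. ring.
Qed.

Lemma TDS_integrand_integrable rA thA eta : 0 < rA -> 0 < thA < PI / 2 -> eta < 1 ->
  Riemann_integrable (TDS_integrand rA thA eta) thA (PI - thA).
Proof.
  intros hr hA he.
  assert (hd : 0 < 1 - eta * sin thA) by (apply one_sub_mul_sin_pos; auto; lra).
  apply continuity_implies_RiemannInt; [lra|]. intros th hth.
  rewrite TDS_integrand_kepler_rate by auto.
  apply continuity_pt_filterlim, (ex_derive_continuous (K := R_AbsRing) (V := R_NormedModule)).
  apply kepler_rate_ex_derive; auto; lra.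
Qed.

Lemma RiemannInt_TDS_integrand rA thA eta
  (pr : Riemann_integrable (TDS_integrand rA thA eta) thA (PI - thA)) :
  0 < rA -> 0 < thA < PI / 2 -> eta < 1 ->
  RiemannInt pr = RInt (conic_G eta (rA * (1 - eta * sin thA))) thA (PI - thA).
Proof.
  intros hr hA he.
  assert (hd : 0 < 1 - eta * sin thA) by (apply one_sub_mul_sin_pos; auto; lra).
  rewrite <- RInt_Reals, TDS_integrand_kepler_rate by auto.
  symmetry. apply RInt_conic_G; auto; lra.
Qed.

Theorem proposition3 (rA thA xA xB : R)
  (hrA : 0 < rA) (hthA : 0 < thA < PI / 2)
  (hsum : xA + xB = 2 * rA) (hdiff : xA - xB = 2 * rA * cos thA) :
  (* v_A is a bijection from ]-oo,1[ onto ]-oo, sqrt(2/xA)[ *)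
  (forall eta, eta < 1 -> vA xA xB eta < sqrt (2 / xA)) /\
  (forall e1 e2, e1 < 1 -> e2 < 1 -> vA xA xB e1 = vA xA xB e2 -> e1 = e2) /\
  (forall v, v < sqrt (2 / xA) -> exists eta, eta < 1 /\ vA xA xB eta = v) /\
  (* time and energy identities *)
  (forall eta, eta < 1 ->
     exists pr : Riemann_integrable (TDS_integrand rA thA eta) thA (PI - thA),
       is_TDR xA xB (vA xA xB eta) (RiemannInt pr) /\
       HS rA thA eta = HR xA (vA xA xB eta)).
Proof.
  replace xA with (rA * (1 + cos thA)) by lra.
  replace xB with (rA * (1 - cos thA)) by lra.
  assert (hs : 0 < sin thA) by (apply sin_gt_0; lra).
  assert (hc : 0 < cos thA) by (apply cos_gt_0; lra).
  assert (hsc : sin thA ^ 2 + cos thA ^ 2 = 1)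
    by (rewrite <- (sin2_cos2 thA); unfold Rsqr; ring).
  split; [|split; [|split]].
  - now apply (vA_lt_sqrt_2_div_xA rA (sin thA)).
  - now apply (vA_injective rA (sin thA)).
  - now apply (vA_surjective rA (sin thA)).
  - intros eta he.
    assert (hd : 0 < 1 - eta * sin thA) by (apply one_sub_mul_sin_pos; auto; lra).
    exists (TDS_integrand_integrable rA thA eta hrA hthA he).
    split; [|now apply (HS_eq_HR_vA rA (sin thA))].
    rewrite RiemannInt_TDS_integrand, (vA_polar rA (sin thA) (cos thA)) by auto.
    set (l := rA * (1 - eta * sin thA)).
    replace (rA * (1 + cos thA)) with (conic_X eta l thA)
      by (unfold conic_X, l; field; lra).
    replace (rA * (1 - cos thA)) with (conic_X eta l (PI - thA))
      by (unfold conic_X, l; rewrite sin_PI_x, Rtrigo_facts.cos_pi_minus; field; lra).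
    apply conic_arc_is_TDR; auto. unfold l; nra.
Qed.
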